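(* For all $\xi,\xi^*>0$ and $\eta\in(0,\infty)^p$, $$\big|\alpha_\eta(\xi,\xi^* )-\alpha_{\eta,\epsilon}(\xi,\xi^* )\big|\le \exp\Big\{\Big(N+(N+a_0)\frac{\|z\|^2}{b_0}\Big)\|W\|^2\delta\Big\}-1 .$$ In particular $\sup_{\xi,\xi^*,\eta}|\alpha_\eta(\xi,\xi^* )-\alpha_{\eta,\epsilon}(\xi,\xi^* )|=O(\delta)$ as $\delta\to0$, with constant depending only on $N,a_0,b_0,W,z$.
   Context: Fix $N,p\ge1$, $W\in\mathbb R^{N\times p}$, $z\in\mathbb R^N$, $a_0,b_0>0$, $\delta>0$; $\|\cdot\|$ is the Euclidean/operator norm. Let $\pi_\xi(t)\propto t^{-1/2}(1+t)^{-1}$. For $\eta\in(0,\infty)^p$ let $D=\mathrm{diag}(\eta_j^{-1})$. For $\xi,\xi^*>0$ let $\xi_{\max}^{-1}=\max\{\xi^{-1},(\xi^* )^{-1}\}$ and $D_\delta=\mathrm{diag}(\eta_j^{-1}\mathbf 1(\xi^{-1}_{\max}\eta_j^{-1}>\delta))$. For $t\in\{\xi,\xi^*\}$ let $M_t=I_N+t^{-1}WDW'$ and $M_{t,\delta}=I_N+t^{-1}WD_\delta W'$. Define $q_\eta(\xi,\xi^* )=\frac{|M_{\xi^*}|^{-1/2}(b_0+z'M_{\xi^*}^{-1}z)^{-(N+a_0)/2}}{|M_{\xi}|^{-1/2}(b_0+z'M_{\xi}^{-1}z)^{-(N+a_0)/2}}\cdot\frac{\pi_\xi(\xi^* )\,\xi^*}{\pi_\xi(\xi)\,\xi}$,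 let $q_{\eta,\delta}$ be the same expression with $M_t$ replaced by $M_{t,\delta}$, and set $\alpha_\eta=\min\{1,q_\eta\}$, $\alpha_{\eta,\epsilon}=\min\{1,q_{\eta,\delta}\}$. *)

From HB Require Import structures.
From Stdlib Require Import Reals Lra ClassicalEpsilon FunctionalExtensionality.
From mathcomp Require Import all_boot all_algebra.

Set Implicit Arguments.
Unset Strict Implicit.
Unset Printing Implicit Defensive.

Definition R_eqb (x y : R) : bool := if Req_EM_T x y then true else false.

Lemma R_eqP : Equality.axiom R_eqb.
Proof. move=> x y; rewrite /R_eqb; case: (Req_EM_T x y) => h; by constructor. Qed.

HB.instance Definition _ := hasDecEq.Build R R_eqP.

Definition R_find (P : pred R) (n : nat) : option R :=
  match excluded_middle_informative (exists x, P x) with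
  | left h => Some (proj1_sig (constructive_indefinite_description _ h))
  | right _ => None
  end.

Lemma R_find_correct P n x : R_find P n = Some x -> P x.
Proof.
rewrite /R_find; case: excluded_middle_informative => // h [<-].
exact: proj2_sig (constructive_indefinite_description _ h).
Qed.

Lemma R_find_complete (P : pred R) : (exists x, P x) -> exists n, R_find P n.
Proof. move=> h; exists 0%N; rewrite /R_find; by case: excluded_middle_informative. Qed.

Lemma R_find_ext (P Q : pred R) : P =1 Q -> R_find P =1 R_find Q.
Proof.
move=> e; have -> : P = Q by apply: functional_extensionality.
by [].
Qed.

HB.instance Definition _ :=
  hasChoice.Build R R_find_correct R_find_complete R_find_ext.

Lemma R_addA : associative Rplus.
Proof. by move=> x y z; rewrite Rplus_assoc. Qed.
Lemma R_mulA : associative Rmult.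
Proof. by move=> x y z; rewrite Rmult_assoc. Qed.

HB.instance Definition _ :=
  GRing.isZmodule.Build R R_addA Rplus_comm Rplus_0_l Rplus_opp_l.

Lemma R1_neq0_bool : (R1 : R) != (R0 : R).
Proof. by apply/R_eqP; exact: R1_neq_R0. Qed.

HB.instance Definition _ :=
  GRing.Zmodule_isComNzRing.Build R R_mulA Rmult_comm Rmult_1_l
    Rmult_plus_distr_r R1_neq0_bool.

Lemma R_mulVf (x : R) : x != R0 -> Rmult (Rinv x) x = R1.
Proof. by move/R_eqP=> h; rewrite Rmult_comm; apply: Rinv_r. Qed.

HB.instance Definition _ := GRing.ComNzRing_isField.Build R R_mulVf Rinv_0.

Local Open Scope R_scope.

Definition qform {n : nat} (A : 'M[R]_n) (x : 'cV[R]_n) : R :=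
  ((x^T *m A *m x)%R ord0 ord0).

Definition Dmat {p : nat} (eta : 'I_p -> R) : 'M[R]_p :=
  \matrix_(i < p, j < p) (if i == j then Rinv (eta i) else 0).

Definition ximax_inv (xi xis : R) : R := Rmax (Rinv xi) (Rinv xis).

Definition Dmat_delta {p : nat} (delta xi xis : R) (eta : 'I_p -> R) : 'M[R]_p :=
  \matrix_(i < p, j < p)
    (if i == j then
       (if Rlt_dec delta (Rmult (ximax_inv xi xis) (Rinv (eta i)))
        then Rinv (eta i) else 0)
     else 0).

Definition Mmat {N p : nat} (W : 'M[R]_(N, p)) (D : 'M[R]_p) (t : R) : 'M[R]_N :=
  (1%:M + (Rinv t) *: (W *m D *m W^T))%R.

(* unnormalised prior density pi_xi(t) = t^{-1/2} (1+t)^{-1};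
   the normalising constant cancels in q *)
Definition pi_xi (t : R) : R := Rinv (sqrt t) * Rinv (1 + t).

Definition lik {N : nat} (a0 b0 : R) (z : 'cV[R]_N) (M : 'M[R]_N) : R :=
  Rpower (\det M)%R (- / 2) *
  Rpower (b0 + qform (invmx M) z) (- ((INR N + a0) / 2)).

Definition q_of {N p : nat} (a0 b0 : R) (W : 'M[R]_(N, p)) (z : 'cV[R]_N)
    (D : 'M[R]_p) (xi xis : R) : R :=
  (lik a0 b0 z (Mmat W D xis) / lik a0 b0 z (Mmat W D xi)) *
  ((pi_xi xis * xis) / (pi_xi xi * xi)).

Definition q_eta {N p : nat} (a0 b0 : R) (W : 'M[R]_(N, p)) (z : 'cV[R]_N)
    (eta : 'I_p -> R) (xi xis : R) : R :=
  q_of a0 b0 W z (Dmat eta) xi xis.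

Definition q_eta_delta {N p : nat} (a0 b0 delta : R) (W : 'M[R]_(N, p))
    (z : 'cV[R]_N) (eta : 'I_p -> R) (xi xis : R) : R :=
  q_of a0 b0 W z (Dmat_delta delta xi xis eta) xi xis.

Definition alpha_eta {N p : nat} (a0 b0 : R) (W : 'M[R]_(N, p)) (z : 'cV[R]_N)
    (eta : 'I_p -> R) (xi xis : R) : R :=
  Rmin 1 (q_eta a0 b0 W z eta xi xis).

Definition alpha_eta_eps {N p : nat} (a0 b0 delta : R) (W : 'M[R]_(N, p))
    (z : 'cV[R]_N) (eta : 'I_p -> R) (xi xis : R) : R :=
  Rmin 1 (q_eta_delta a0 b0 delta W z eta xi xis).

Definition sqnorm {N : nat} (z : 'cV[R]_N) : R := (z^T *m z)%R ord0 ord0.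

Definition opnorm2 {N p : nat} (W : 'M[R]_(N, p)) : R :=
  match excluded_middle_informative
          (exists L, is_lub (fun v => exists x : 'cV[R]_p,
                                 Rle (sqnorm x) 1 /\ v = sqnorm (W *m x)%R) L) with
  | left h => proj1_sig (constructive_indefinite_description _ h)
  | right _ => 0
  end.

(* Write q = K exp (L(xi^* ) - L(xi)), where L(t) is the logarithm of the
   likelihood factor at M_t and K > 0 the prior ratio, and q_delta likewise
   with L_delta. Since |min(1, e^x) - min(1, e^y)| <= e^|x - y| - 1, it
   suffices to bound |L(t) - L_delta(t)| by half the exponent for t = xi, xi^*.
   Now M_t = M_{t,delta} + E with E = sum_j c_j w_j w_j' over the columns w_j
   of W, where the dropped coefficients c_j = t^-1 eta_j^-1 are at most
   xi_max^-1 eta_j^-1 <= delta; hence 0 <= E <= delta ||W||^2 I. Adding E one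
   rank-one term at a time (matrix determinant lemma) keeps the matrices above
   the identity and raises log|M| by at most delta sum_j ||w_j||^2
   <= N delta ||W||^2, while z'M^-1 z moves by at most delta ||W||^2 ||z||^2,
   which shifts log(b0 + z'M^-1 z) by at most that amount divided by b0. *)
From HB Require Import structures.
From Stdlib Require Import Reals Lra Psatz ClassicalEpsilon.
From mathcomp Require Import all_boot all_algebra.
Import GRing.Theory.

Local Open Scope ring_scope.

Lemma det1D_rank1 (K : comNzRingType) (n : nat) (a : 'cV[K]_n) (b : 'rV[K]_n) :
  \det (1%:M + a *m b) = 1 + (b *m a) 0 0.
Proof.
have E1 : block_mx 1%:M 0 b 1%:M *m block_mx 1%:M (- a) 0 (1%:M + b *m a)
   = block_mx 1%:M (- a) b (1%:M : 'M[K]_1).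
  rewrite mulmx_block !mul1mx !mul0mx ?mulmx0 ?mulmx1 ?addr0 ?add0r mulmxN.
  by rewrite addrCA addNr addr0.
have E2 : block_mx (1%:M + a *m b) (- a) 0 1%:M *m block_mx 1%:M 0 b 1%:M
   = block_mx 1%:M (- a) b (1%:M : 'M[K]_1).
  rewrite mulmx_block !mul1mx !mul0mx ?mulmx0 ?mulmx1 ?addr0 ?add0r mulNmx.
  by rewrite addrK.
have := congr1 determinant (etrans E1 (esym E2)).
rewrite !det_mulmx !det_lblock !det_ublock !det1 !det_mx11.
by rewrite !mxE /= !mul1r !mulr1 => <-.
Qed.

Local Open Scope R_scope.

Lemma sum_le {I : Type} (r : seq I) (F G : I -> R) :
  (forall j, F j <= G j) -> (\sum_(j <- r) F j)%R <= (\sum_(j <- r) G j)%R.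
Proof.
move=> h; apply: (big_ind2 (fun a b => a <= b)) => //.
- exact: Rle_refl.
- by move=> a b c d h1 h2; apply: Rplus_le_compat.
Qed.

Lemma sum_ge0 {I : Type} (r : seq I) (P : pred I) (F : I -> R) :
  (forall j, 0 <= F j) -> 0 <= (\sum_(j <- r | P j) F j)%R.
Proof.
move=> h; apply: (big_ind (fun v => 0 <= v)) => //.
- exact: Rle_refl.
- by move=> a b ha hb; apply: Rplus_le_le_0_compat.
Qed.

Lemma Rabs_sum {I : Type} (r : seq I) (F : I -> R) :
  Rabs (\sum_(j <- r) F j)%R <= (\sum_(j <- r) Rabs (F j))%R.
Proof.
elim: r => [|j r IH]; first by rewrite !big_nil Rabs_R0; apply: Rle_refl.
rewrite !big_cons; apply: (Rle_trans _ _ _ (Rabs_triang _ _)).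
exact: Rplus_le_compat_l.
Qed.

Lemma natmul_INR (x : R) (k : nat) : (x *+ k)%R = INR k * x.
Proof.
elim: k => [|k IH]; first by rewrite mulr0n /= Rmult_0_l.
by rewrite mulrS IH S_INR; change (x + INR k * x = (INR k + 1) * x); ring.
Qed.

Lemma ln_le x y : 0 < x -> x <= y -> ln x <= ln y.
Proof.
move=> hx hxy; case: (Rle_or_lt (ln x) (ln y)) => // h.
have := exp_increasing _ _ h; rewrite !exp_ln; lra.
Qed.

Lemma exp_le x y : x <= y -> exp x <= exp y.
Proof.
case/Rle_lt_or_eq_dec => [h | ->]; last exact: Rle_refl.
exact: Rlt_le (exp_increasing _ _ h).
Qed.

Definition dot {n : nat} (x y : 'cV[R]_n) : R := (x^T *m y)%R ord0 ord0.

Lemma dot_mulmxl {m n : nat} (A : 'M[R]_(m, n)) (x : 'cV[R]_n) (y : 'cV[R]_m) :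
  dot (A *m x)%R y = dot x (A^T *m y)%R.
Proof. by rewrite /dot trmx_mul mulmxA. Qed.

Section Dot.
Context {n : nat}.
Implicit Types x y w : 'cV[R]_n.

Lemma dotE x y : dot x y = (\sum_i (x i ord0 * y i ord0))%R.
Proof. by rewrite /dot !mxE; apply: eq_bigr => i _; rewrite mxE. Qed.

Lemma dotC x y : dot x y = dot y x.
Proof. by rewrite !dotE; apply: eq_bigr => i _; rewrite mulrC. Qed.

Lemma dotDr x y w : dot x (y + w)%R = dot x y + dot x w.
Proof. by rewrite /dot mulmxDr mxE. Qed.

Lemma dotDl x y w : dot (y + w)%R x = dot y x + dot w x.
Proof. by rewrite dotC dotDr !(dotC x). Qed.

Lemma dotZr a x y : dot x (a *: y)%R = a * dot x y.
Proof. by rewrite /dot -scalemxAr mxE. Qed.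

Lemma dotZl a x y : dot (a *: y)%R x = a * dot y x.
Proof. by rewrite dotC dotZr dotC. Qed.

Lemma dotNr x y : dot x (- y)%R = - dot x y.
Proof. by rewrite /dot mulmxN mxE. Qed.

Lemma dotNl x y : dot (- y)%R x = - dot y x.
Proof. by rewrite dotC dotNr dotC. Qed.

Lemma qformE (A : 'M[R]_n) x : qform A x = dot x (A *m x)%R.
Proof. by rewrite /qform /dot mulmxA. Qed.

Lemma sqnormE x : sqnorm x = dot x x.
Proof. by []. Qed.

Lemma dot_ge0 x : 0 <= dot x x.
Proof. by rewrite dotE; apply: sum_ge0 => i; apply: Rle_0_sqr. Qed.

Lemma sqnormZ k x : sqnorm (k *: x)%R = k * k * sqnorm x.
Proof. by rewrite !sqnormE dotZl dotZr Rmult_assoc. Qed.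

Lemma entry_sq_le x i : x i ord0 * x i ord0 <= dot x x.
Proof.
rewrite dotE (bigD1 i) //=.
have := sum_ge0 (index_enum 'I_n) (fun j => j != i)
  (fun j => x j ord0 * x j ord0) (fun j => Rle_0_sqr _).
by move=> h; rewrite -{1}(Rplus_0_r (x i ord0 * x i ord0)); apply: Rplus_le_compat_l.
Qed.

Lemma dot_le_avg x y : dot x y <= (dot x x + dot y y) / 2.
Proof.
have := dot_ge0 (x - y)%R.
rewrite dotDl !dotDr !dotNl !dotNr (dotC y x); lra.
Qed.

Lemma Ndot_le_avg x y : - dot x y <= (dot x x + dot y y) / 2.
Proof.
have := dot_ge0 (x + y)%R.
rewrite dotDl !dotDr (dotC y x); lra.
Qed.

Lemma dot_expand x y (c : R) :
  dot (x + c *: y)%R (x + c *: y)%R =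
  dot x x + c * dot x y + c * dot y x + c * c * dot y y.
Proof. rewrite !dotDl !dotDr !dotZl !dotZr; ring. Qed.

Lemma qform_expand (E : 'M[R]_n) x y (c : R) :
  dot (x + c *: y)%R (E *m (x + c *: y))%R =
  dot x (E *m x)%R + c * dot x (E *m y)%R + c * dot y (E *m x)%R
  + c * c * dot y (E *m y)%R.
Proof.
rewrite mulmxDr.
have -> : (E *m (c *: y))%R = (c *: (E *m y))%R by rewrite scalemxAr.
rewrite !dotDl !dotDr !dotZl !dotZr; ring.
Qed.

Lemma qform_rank1 x w (c : R) :
  dot x ((c *: (w *m w^T)) *m x)%R = c * (dot w x * dot w x).
Proof.
rewrite -scalemxAl dotZr -mulmxA /dot mulmxA [in LHS]mxE big_ord1.
by congr (_ * (_ * _)); apply: (dotC x w).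
Qed.

End Dot.

(* P >= I in the Loewner order; the positivity of the determinant follows
   from it but is carried along rather than proved. *)
Definition dominates_id {n : nat} (P : 'M[R]_n) :=
  P^T = P /\ (forall x, dot x x <= dot x (P *m x)%R) /\ 0 < \det P.

Section DominatesId.
Context {n : nat}.
Implicit Types (P : 'M[R]_n) (x w : 'cV[R]_n).

Lemma dominates_id_unit P : dominates_id P -> P \in unitmx.
Proof.
move=> [_ [_ hd]]; rewrite unitmxE unitfE; apply/eqP => h.
by rewrite h in hd; apply: (Rlt_irrefl 0).
Qed.

Lemma dominates_id1 : dominates_id (1%:M : 'M[R]_n).
Proof.
split; first exact: trmx1.
split; first by move=> x; rewrite mul1mx; apply: Rle_refl.
by rewrite det1; apply: Rlt_0_1.
Qed.

Lemma dominates_id_invmx P w : dominates_id P ->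
  let u := (invmx P *m w)%R in
  (P *m u)%R = w /\ dot u u <= dot w u <= dot w w.
Proof.
move=> hP u.
have hPu : (P *m u)%R = w by rewrite /u mulKVmx //; apply: dominates_id_unit.
case: hP => [hs [hq _]].
have h1 : dot u u <= dot w u by rewrite -{1}hPu dot_mulmxl hs; apply: hq.
by have := dot_le_avg w u; split => //; split => //; lra.
Qed.

Lemma det_rank1_update P w (c : R) : dominates_id P ->
  \det (P + c *: (w *m w^T))%R = \det P * (1 + c * dot w (invmx P *m w)%R).
Proof.
move=> hP; have [hPu _] := dominates_id_invmx _ w hP.
set u := (invmx P *m w)%R in hPu *.
have -> : (P + c *: (w *m w^T))%R = (P *m (1%:M + (c *: u) *m w^T))%R.
  by rewrite mulmxDr mulmx1 -scalemxAl -scalemxAr mulmxA hPu.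
rewrite det_mulmx det1D_rank1 -scalemxAr mxE.
by [].
Qed.

Lemma dominates_id_rank1 P w (c : R) : dominates_id P -> 0 <= c ->
  dominates_id (P + c *: (w *m w^T))%R /\
  \det P <= \det (P + c *: (w *m w^T))%R <= \det P * exp (c * dot w w).
Proof.
move=> hP hc.
have [_ [h1 h2]] := dominates_id_invmx _ w hP.
have hdet := det_rank1_update _ w c hP.
set s := dot w (invmx P *m w)%R in h1 h2 hdet.
have hs : 0 <= c * s by apply: Rmult_le_pos => //; have := dot_ge0 (invmx P *m w)%R; lra.
have hsw : c * s <= c * dot w w by apply: Rmult_le_compat_l.
have he := exp_ineq1_le (c * dot w w).
case: hP => [hsym [hq hd0]].
split; first split.
- by rewrite linearD /= hsym linearZ /= trmx_mul trmxK.
- split.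
  + move=> x; rewrite mulmxDl dotDr qform_rank1.
    have := hq x; have := Rmult_le_pos _ _ hc (Rle_0_sqr (dot w x)).
    rewrite /Rsqr; lra.
  + by rewrite hdet; apply: Rmult_lt_0_compat => //; lra.
- by rewrite hdet; split; nra.
Qed.

End DominatesId.

Definition outer_sum {n : nat} {I : Type} (r : seq I) (f : I -> R)
    (v : I -> 'cV[R]_n) : 'M[R]_n :=
  (\sum_(j <- r) f j *: (v j *m (v j)^T))%R.

Section OuterSum.
Context {n : nat} {I : Type}.
Implicit Types (r : seq I) (f : I -> R) (v : I -> 'cV[R]_n).

Lemma outer_sum_tr r f v : (outer_sum r f v)^T = outer_sum r f v.
Proof.
rewrite /outer_sum; elim: r => [|j r IH]; first by rewrite !big_nil trmx0.
by rewrite !big_cons linearD /= IH linearZ /= trmx_mul trmxK.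
Qed.

Lemma outer_sum_qform r f v x :
  dot x (outer_sum r f v *m x)%R = (\sum_(j <- r) f j * (dot (v j) x * dot (v j) x))%R.
Proof.
rewrite /outer_sum; elim: r => [|j r IH].
  by rewrite !big_nil mul0mx /dot mulmx0 mxE.
by rewrite !big_cons mulmxDl dotDr qform_rank1 IH.
Qed.

Lemma outer_sumD r f g v :
  outer_sum r (fun j => f j + g j) v = (outer_sum r f v + outer_sum r g v)%R.
Proof. by rewrite /outer_sum -big_split; apply: eq_bigr => j _; rewrite scalerDl. Qed.

Lemma dominates_id_outer_sum r f v P : dominates_id P -> (forall j, 0 <= f j) ->
  dominates_id (P + outer_sum r f v)%R /\
  \det P <= \det (P + outer_sum r f v)%R <=
    \det P * exp (\sum_(j <- r) f j * dot (v j) (v j))%R.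
Proof.
rewrite /outer_sum; elim: r P => [|j r IH] P hP hf.
  rewrite !big_nil addr0 exp_0 Rmult_1_r; split => //; split; exact: Rle_refl.
rewrite !big_cons addrA.
have [hP1 [hl1 hu1]] := dominates_id_rank1 _ (v j) _ hP (hf j).
have [hP2 [hl2 hu2]] := IH _ hP1 hf.
split => //; split; first exact: (Rle_trans _ _ _ hl1 hl2).
apply: (Rle_trans _ _ _ hu2).
change (exp (f j * dot (v j) (v j) + (\sum_(j0 <- r) f j0 * dot (v j0) (v j0))%R))
  with (exp (f j * dot (v j) (v j) + \sum_(j0 <- r) f j0 * dot (v j0) (v j0))%R).
rewrite exp_plus -Rmult_assoc; apply: Rmult_le_compat_r => //.
exact: Rlt_le (exp_pos _).
Qed.

Lemma ln_det_outer_sum r f v P : dominates_id P -> (forall j, 0 <= f j) ->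
  0 <= ln (\det (P + outer_sum r f v)%R) - ln (\det P)
    <= (\sum_(j <- r) f j * dot (v j) (v j))%R.
Proof.
move=> hP hf; have [hPE [hl hu]] := dominates_id_outer_sum r f v P hP hf.
have hd : 0 < \det P by case: hP => [_ []].
have hdE : 0 < \det (P + outer_sum r f v)%R by case: hPE => [_ []].
split; first by have := ln_le _ _ hd hl; lra.
have := ln_le _ _ hdE hu; rewrite ln_mult // ?ln_exp; [lra | exact: exp_pos].
Qed.

End OuterSum.

Section InvmxPerturb.
Context {n : nat}.
Implicit Types (A E : 'M[R]_n) (z : 'cV[R]_n).

Lemma qform_invmx_ge0 A z : dominates_id A -> 0 <= dot z (invmx A *m z)%R.
Proof.
move=> hA; have [_ [h _]] := dominates_id_invmx _ z hA.
have := dot_ge0 (invmx A *m z)%R; lra.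
Qed.

(* With u = (A + E)^-1 z and v = A^-1 z the difference is u'Ev, which the
   Cauchy-Schwarz inequality for the form of E, 0 <= E <= k I, bounds by
   k (|u|^2 + |v|^2) / 2 <= k |z|^2. *)
Lemma qform_invmx_perturb A E (k : R) z :
  dominates_id A -> dominates_id (A + E)%R -> E^T = E ->
  (forall x, 0 <= dot x (E *m x)%R <= k * dot x x) -> 0 <= k ->
  Rabs (dot z (invmx A *m z)%R - dot z (invmx (A + E) *m z)%R) <= k * dot z z.
Proof.
move=> hA hAE hE hk k0.
have [hu [uu1 uu2]] := dominates_id_invmx _ z hAE.
have [hv [vv1 vv2]] := dominates_id_invmx _ z hA.
move: (invmx (A + E) *m z)%R (invmx A *m z)%R hu uu1 uu2 hv vv1 vv2
  => u v hu uu1 uu2 hv vv1 vv2.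
have hsym : (A + E)^T = (A + E)%R by rewrite linearD /= hE; case: hA => ->.
have key : dot z v - dot z u = dot u (E *m v)%R.
  rewrite -{1}hu dot_mulmxl hsym mulmxDl dotDr hv (dotC u z); ring.
have sym : dot v (E *m u)%R = dot u (E *m v)%R by rewrite dotC dot_mulmxl hE.
have [p1 p2] := hk (u + IZR 1 *: v)%R.
have [m1 m2] := hk (u + IZR (-1) *: v)%R.
move: p1 p2 m1 m2; rewrite !qform_expand !dot_expand sym (dotC v u).
have := dot_le_avg u v; have := Ndot_le_avg u v.
have := dot_ge0 u; have := dot_ge0 v.
move=> h0v h0u h2 h1 p1 p2 m1 m2.
rewrite key.
have H1 : 0 <= k * (dot u u + dot v v - 2 * dot u v) by apply: Rmult_le_pos => //; lra.
have H2 : 0 <= k * (dot u u + dot v v + 2 * dot u v) by apply: Rmult_le_pos => //; lra.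
have C : k * (2 * dot u u + 2 * dot v v) <= k * (4 * dot z z).
  by apply: Rmult_le_compat_l => //; lra.
have up : 4 * dot u (E *m v)%R <= k * (2 * dot u u + 2 * dot v v) by nra.
have lo : - (4 * dot u (E *m v)%R) <= k * (2 * dot u u + 2 * dot v v) by nra.
apply: Rabs_le; lra.
Qed.

End InvmxPerturb.

Section OperatorNorm.
Context {N p : nat} (W : 'M[R]_(N, p)).

Let image_of_unit_ball :=
  fun v => exists x : 'cV[R]_p, sqnorm x <= 1 /\ v = sqnorm (W *m x)%R.

Lemma image_of_unit_ball_bound : bound image_of_unit_ball.
Proof.
exists (\sum_(i < N) (\sum_(j < p) Rabs (W i j)) * (\sum_(j < p) Rabs (W i j)))%R.
move=> v [x [hx ->]]; rewrite sqnormE dotE; apply: sum_le => i.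
have hxj : forall j, Rabs (x j ord0) <= 1.
  by move=> j; have := entry_sq_le x j; rewrite -sqnormE => hj; apply: Rabs_le; nra.
have ha : Rabs ((W *m x)%R i ord0) <= (\sum_(j < p) Rabs (W i j))%R.
  rewrite mxE; apply: (Rle_trans _ _ _ (Rabs_sum _ _)); apply: sum_le => j.
  change (Rabs (W i j * x j ord0) <= Rabs (W i j)).
  rewrite Rabs_mult; have := Rabs_pos (W i j); have := hxj j; nra.
apply: (Rle_trans _ _ _ (Rle_abs _)).
change (Rabs ((W *m x)%R i ord0 * (W *m x)%R i ord0) <=
        (\sum_(j < p) Rabs (W i j))%R * (\sum_(j < p) Rabs (W i j))%R).
by rewrite Rabs_mult; apply: Rmult_le_compat => //; apply: Rabs_pos.
Qed.

Lemma opnorm2_ub x : sqnorm x <= 1 -> sqnorm (W *m x)%R <= opnorm2 W.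
Proof.
rewrite /opnorm2; case: excluded_middle_informative => [h|h].
  case: (constructive_indefinite_description _ h) => /= L [hub _] hx.
  by apply: hub; exists x.
exfalso; apply: h.
have h0 : sqnorm (0 : 'cV[R]_p) <= 1 by rewrite sqnormE /dot mulmx0 mxE; apply: Rle_0_1.
have [m hm] := completeness _ image_of_unit_ball_bound
  (ex_intro _ _ (ex_intro _ 0%R (conj h0 erefl))).
by exists m.
Qed.

Lemma opnorm2_ge0 : 0 <= opnorm2 W.
Proof.
have h0 : sqnorm (0 : 'cV[R]_p) <= 1 by rewrite sqnormE /dot mulmx0 mxE; apply: Rle_0_1.
by have := opnorm2_ub 0%R h0; rewrite sqnormE /dot !mulmx0 mxE.
Qed.

(* Rescale y to the unit sphere; when |y| = 0 but |W y| > 0, the multiples of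
   y would make opnorm2 W unbounded. *)
Lemma sqnorm_mulmx_le y : sqnorm (W *m y)%R <= opnorm2 W * sqnorm y.
Proof.
set s := sqnorm y; set c := sqnorm (W *m y)%R; set L := opnorm2 W.
have hk : forall k, k * k * s <= 1 -> k * k * c <= L.
  by move=> k hk; rewrite /c -sqnormZ scalemxAr; apply: opnorm2_ub; rewrite sqnormZ.
have hs0 : 0 <= s by apply: dot_ge0.
have hc0 : 0 <= c by apply: dot_ge0.
have hL0 : 0 <= L := opnorm2_ge0.
case: (Rle_lt_or_eq_dec _ _ hs0) => hs.
  have hq := sqrt_sqrt s hs0.
  have hsq : 0 < sqrt s by apply: sqrt_lt_R0.
  have := hk (/ sqrt s).
  rewrite -Rinv_mult hq Rinv_l; last lra.
  move=> /(_ (Rle_refl 1)) h.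
  have := Rmult_le_compat_l _ _ _ hs0 h.
  rewrite -Rmult_assoc Rinv_r; lra.
rewrite -hs Rmult_0_r.
case: (Rle_lt_or_eq_dec _ _ hc0) => hc; last by rewrite -hc; apply: Rle_refl.
have hpos : 0 <= (Rabs L + 1) / c.
  by apply: Rlt_le; apply: Rdiv_lt_0_compat => //; have := Rabs_pos L; lra.
have := hk (sqrt ((Rabs L + 1) / c)).
rewrite sqrt_sqrt // -hs Rmult_0_r => /(_ Rle_0_1).
rewrite /Rdiv Rmult_assoc Rinv_l; last lra.
have := Rle_abs L; lra.
Qed.

(* |W'x|^2 = x'W y with y = W'x, and 2 l |y|^2 <= l^2 |x|^2 + |W y|^2 for every
   l by expanding |W y - l x|^2 >= 0; take l = ||W||^2. *)
Lemma sqnorm_trmx_mulmx_le x : sqnorm (W^T *m x)%R <= opnorm2 W * sqnorm x.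
Proof.
set y := (W^T *m x)%R; set L := opnorm2 W.
have e1 : sqnorm y = dot x (W *m y)%R by rewrite sqnormE {1}/y dot_mulmxl trmxK.
have hw := sqnorm_mulmx_le y.
have hL0 : 0 <= L := opnorm2_ge0.
have am : forall l, 2 * l * sqnorm y <= l * l * sqnorm x + sqnorm (W *m y)%R.
  move=> l; have := dot_ge0 ((W *m y) + Ropp l *: x)%R.
  rewrite dot_expand (dotC (W *m y)%R x) -e1 => h.
  rewrite !sqnormE in h *; nra.
fold L in hw.
case: (Rle_lt_or_eq_dec _ _ hL0) => hL.
  by have := am L; move=> h; apply: (Rmult_le_reg_l L) => //; nra.
rewrite -hL in hw *; rewrite Rmult_0_l.
have hy0 : 0 <= sqnorm y by apply: dot_ge0.
have hx0 : 0 <= sqnorm x by apply: dot_ge0.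
case: (Rle_lt_or_eq_dec _ _ hy0) => hy; last by rewrite -hy; apply: Rle_refl.
set t := sqnorm y / (sqnorm x + 1).
have ht : t * (sqnorm x + 1) = sqnorm y by rewrite /t; field; lra.
have ht0 : 0 < t by apply: Rdiv_lt_0_compat; lra.
have := am t; nra.
Qed.

Lemma dot_col j x : dot (col j W) x = (W^T *m x)%R j ord0.
Proof. by rewrite dotE mxE; apply: eq_bigr => i _; rewrite !mxE. Qed.

Lemma sum_sqnorm_col : (\sum_(j < p) dot (col j W) (col j W))%R <= INR N * opnorm2 W.
Proof.
have -> : (\sum_(j < p) dot (col j W) (col j W))%R =
          (\sum_(i < N) dot (col i W^T) (col i W^T))%R.
  under eq_bigr => j _ do rewrite dotE.
  under [X in _ = X]eq_bigr => i _ do rewrite dotE.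
  rewrite exchange_big /=; apply: eq_bigr => i _; apply: eq_bigr => j _.
  by rewrite !mxE.
apply: (Rle_trans _ (\sum_(i < N) opnorm2 W)%R); last first.
  by rewrite sumr_const card_ord natmul_INR; apply: Rle_refl.
apply: sum_le => i.
have := sqnorm_trmx_mulmx_le (delta_mx i ord0).
have -> : sqnorm (delta_mx i ord0 : 'cV[R]_N) = 1.
  by rewrite sqnormE /dot trmx_delta mul_delta_mx mxE !eqxx.
by rewrite Rmult_1_r colE.
Qed.

Lemma outer_sum_col_qform_le (f : 'I_p -> R) (delta : R) x :
  0 <= delta -> (forall j, 0 <= f j <= delta) ->
  0 <= dot x (outer_sum (index_enum 'I_p) f (fun j => col j W) *m x)%R
    <= delta * opnorm2 W * dot x x.
Proof.
move=> hd hf; rewrite outer_sum_qform; split.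
  by apply: sum_ge0 => j; apply: Rmult_le_pos; [case: (hf j) | apply: Rle_0_sqr].
apply: (Rle_trans _ (delta * \sum_(j < p) dot (col j W) x * dot (col j W) x)%R).
  rewrite mulr_sumr; apply: sum_le => j.
  by apply: Rmult_le_compat_r; [apply: Rle_0_sqr | case: (hf j)].
have -> : (\sum_(j < p) dot (col j W) x * dot (col j W) x)%R = sqnorm (W^T *m x)%R.
  by rewrite sqnormE dotE; apply: eq_bigr => j _; rewrite dot_col.
have := Rmult_le_compat_l _ _ _ hd (sqnorm_trmx_mulmx_le x).
by rewrite sqnormE Rmult_assoc.
Qed.

End OperatorNorm.

Section Decomposition.
Context {N p : nat} (W : 'M[R]_(N, p)) (delta xi xis : R) (eta : 'I_p -> R).

Lemma Mmat_diag (g : 'I_p -> R) (t : R) :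
  Mmat W (\matrix_(i, j) (if i == j then g i else 0%R)) t =
  (1%:M + outer_sum (index_enum 'I_p) (fun j => Rmult (/ t) (g j)) (fun j => col j W))%R.
Proof.
have -> : (\matrix_(i, j) (if i == j then g i else 0%R) : 'M[R]_p) = diag_mx (\row_i g i).
  apply/matrixP => i j; rewrite !mxE; case: eqP => [->|_]; first by rewrite mulr1n.
  by rewrite mulr0n.
have WDW : (W *m diag_mx (\row_i g i) *m W^T)%R
    = outer_sum (index_enum 'I_p) g (fun j => col j W).
  rewrite mul_mx_diag /outer_sum; apply/matrixP => i k.
  rewrite summxE !mxE; apply: eq_bigr => j _.
  by rewrite !mxE big_ord1 !mxE mulrAC mulrC.
rewrite /Mmat WDW /outer_sum scaler_sumr; congr (_ + _)%R.
by apply: eq_bigr => j _; rewrite scalerA.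
Qed.

Definition dropped_coef (t : R) (j : 'I_p) : R :=
  if Rlt_dec delta (ximax_inv xi xis * / eta j) then 0 else / t * / eta j.

Hypotheses (delta_gt0 : 0 < delta) (eta_gt0 : forall j, 0 < eta j).

Lemma dropped_coef_bound t : 0 < t -> / t <= ximax_inv xi xis ->
  forall j, 0 <= dropped_coef t j <= delta.
Proof.
move=> ht htx j; have hej : 0 < / eta j by apply: Rinv_0_lt_compat.
have hti : 0 < / t by apply: Rinv_0_lt_compat.
have := Rmult_le_compat_r _ _ _ (Rlt_le _ _ hej) htx.
by rewrite /dropped_coef; case: Rlt_dec => h /= hle; split; nra.
Qed.

Lemma Mmat_Dmat_split t :
  Mmat W (Dmat eta) t = (Mmat W (Dmat_delta delta xi xis eta) t
    + outer_sum (index_enum 'I_p) (dropped_coef t) (fun j => col j W))%R.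
Proof.
rewrite /Dmat /Dmat_delta !Mmat_diag -addrA -outer_sumD; congr (_ + _)%R.
rewrite /outer_sum; apply: eq_bigr => j _; congr (_ *: _)%R.
by rewrite /dropped_coef; case: Rlt_dec => h /=; rewrite ?Rmult_0_r ?Rplus_0_r ?Rplus_0_l.
Qed.

Lemma dominates_id_Mmat_delta t : 0 < t ->
  dominates_id (Mmat W (Dmat_delta delta xi xis eta) t).
Proof.
move=> ht; rewrite /Dmat_delta Mmat_diag.
apply: (proj1 (dominates_id_outer_sum _ _ _ _ dominates_id1 _)) => j.
have := Rinv_0_lt_compat _ ht; have := Rinv_0_lt_compat _ (eta_gt0 j).
by case: Rlt_dec => _ /=; nra.
Qed.

End Decomposition.

Definition loglik {N : nat} (a0 b0 : R) (z : 'cV[R]_N) (M : 'M[R]_N) : R :=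
  - / 2 * ln (\det M) + - ((INR N + a0) / 2) * ln (b0 + qform (invmx M) z).

Lemma likE {N : nat} (a0 b0 : R) (z : 'cV[R]_N) (M : 'M[R]_N) :
  lik a0 b0 z M = exp (loglik a0 b0 z M).
Proof. by rewrite /lik /loglik /Rpower exp_plus. Qed.

Lemma Rabs_ln_sub_le a b c : 0 < c -> c <= a -> c <= b ->
  Rabs (ln a - ln b) <= Rabs (a - b) / c.
Proof.
move=> hc ha hb.
have ln_sub_le : forall x y, c <= x -> c <= y -> ln x - ln y <= Rabs (x - y) / c.
  move=> x y hx hy.
  have e : exp (ln x - ln y) = x / y by rewrite /Rminus exp_plus exp_Ropp !exp_ln; lra.
  have := exp_ineq1_le (ln x - ln y); rewrite e.
  have -> : x / y = 1 + (x - y) / y by field; lra.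
  have : (x - y) / y <= Rabs (x - y) / c.
    have hi : / y <= / c by apply: Rinv_le_contravar.
    have hyi : 0 < / y by apply: Rinv_0_lt_compat; lra.
    have := Rmult_le_compat_r _ _ _ (Rlt_le _ _ hyi) (Rle_abs (x - y)).
    have := Rmult_le_compat_l _ _ _ (Rabs_pos (x - y)) hi.
    rewrite /Rdiv; lra.
  lra.
have := ln_sub_le _ _ ha hb; have := ln_sub_le _ _ hb ha.
rewrite Rabs_minus_sym => h1 h2; apply: Rabs_le; lra.
Qed.

Lemma loglik_perturb {N : nat} (a0 b0 : R) (z : 'cV[R]_N) (A E : 'M[R]_N) (k d : R) :
  0 < a0 -> 0 < b0 -> dominates_id A -> dominates_id (A + E)%R -> E^T = E ->
  (forall x, 0 <= dot x (E *m x)%R <= k * dot x x) -> 0 <= k ->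
  0 <= ln (\det (A + E)%R) - ln (\det A) <= d ->
  Rabs (loglik a0 b0 z (A + E)%R - loglik a0 b0 z A)
    <= (d + (INR N + a0) * k * dot z z / b0) / 2.
Proof.
move=> ha0 hb0 hA hAE hE hk k0 [d1 d2].
have hQ := qform_invmx_ge0 _ z hAE; have hQA := qform_invmx_ge0 _ z hA.
have hdiff := qform_invmx_perturb _ _ _ z hA hAE hE hk k0.
rewrite /loglik !qformE.
move: hQ hQA hdiff; set Q := dot z _; set QA := dot z _ => hQ hQA hdiff.
have lq : Rabs (ln (b0 + Q) - ln (b0 + QA)) <= k * dot z z / b0.
  apply: (Rle_trans _ _ _ (Rabs_ln_sub_le _ _ _ hb0 _ _)); try lra.
  rewrite Rabs_minus_sym; have -> : b0 + QA - (b0 + Q) = QA - Q by ring.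
  by apply: Rmult_le_compat_r => //; apply: Rlt_le; apply: Rinv_0_lt_compat.
set Y := ln (b0 + Q) - ln (b0 + QA) in lq.
have y1 := Rle_trans _ _ _ (Rle_abs Y) lq.
have y2 : - Y <= k * dot z z / b0 by have := Rle_abs (- Y); rewrite Rabs_Ropp; lra.
set c := (INR N + a0) / 2.
have hc : 0 <= c by rewrite /c; have := pos_INR N; lra.
have := Rmult_le_compat_l _ _ _ hc y1; have := Rmult_le_compat_l _ _ _ hc y2.
set X := ln (\det (A + E)%R) - ln (\det A) in d1 d2.
have -> : - / 2 * ln (\det (A + E)%R) + - c * ln (b0 + Q)
          - (- / 2 * ln (\det A) + - c * ln (b0 + QA)) = - / 2 * X - c * Y.
  by rewrite /X /Y; ring.
have -> : (d + (INR N + a0) * k * dot z z / b0) / 2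
  = / 2 * d + c * (k * dot z z / b0) by rewrite /c; field; lra.
move=> c1 c2; apply: Rabs_le; split; nra.
Qed.

Lemma loglik_Dmat_delta_close {N p : nat} (W : 'M[R]_(N, p)) (z : 'cV[R]_N)
    (a0 b0 delta xi xis : R) (eta : 'I_p -> R) (t : R) :
  0 < a0 -> 0 < b0 -> 0 < delta -> (forall j, 0 < eta j) ->
  0 < t -> / t <= ximax_inv xi xis ->
  Rabs (loglik a0 b0 z (Mmat W (Dmat eta) t)
        - loglik a0 b0 z (Mmat W (Dmat_delta delta xi xis eta) t))
  <= (INR N * (delta * opnorm2 W)
      + (INR N + a0) * (delta * opnorm2 W) * dot z z / b0) / 2.
Proof.
move=> ha0 hb0 hd heta ht htx.
have hA := dominates_id_Mmat_delta W delta xi xis eta heta t ht.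
have hf := dropped_coef_bound delta xi xis eta hd heta t ht htx.
have hf0 j : 0 <= dropped_coef delta xi xis eta t j by case: (hf j).
rewrite (Mmat_Dmat_split W delta xi xis).
set A := Mmat _ _ _ in hA *; set f := dropped_coef _ _ _ _ t in hf hf0 *.
have hAE := proj1 (dominates_id_outer_sum _ f (fun j => col j W) _ hA hf0).
have [l1 l2] := ln_det_outer_sum (index_enum 'I_p) f (fun j => col j W) _ hA hf0.
apply: loglik_perturb => //.
- exact: outer_sum_tr.
- by move=> x; apply: outer_sum_col_qform_le => //; apply: Rlt_le.
- by apply: Rmult_le_pos; [apply: Rlt_le | apply: opnorm2_ge0].
split => //; apply: (Rle_trans _ _ _ l2).
apply: (Rle_trans _ (delta * \sum_(j < p) dot (col j W) (col j W))%R).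
  rewrite mulr_sumr; apply: sum_le => j.
  by apply: Rmult_le_compat_r; [apply: dot_ge0 | case: (hf j)].
have := Rmult_le_compat_l _ _ _ (Rlt_le _ _ hd) (sum_sqnorm_col W).
by move=> h; apply: (Rle_trans _ _ _ h); right; ring.
Qed.

Lemma Rmin1_exp_sub_le x y : y <= x ->
  0 <= Rmin 1 (exp x) - Rmin 1 (exp y) <= exp (x - y) - 1.
Proof.
move=> hxy.
have -> : exp x = exp y * exp (x - y) by rewrite -exp_plus; congr exp; ring.
have he : 1 <= exp (x - y) by have := exp_ineq1_le (x - y); lra.
move: (exp_pos y) he; move: (exp y) (exp (x - y)) => b e hb he.
by rewrite /Rmin; case: Rle_dec => h1 /=; case: Rle_dec => h2 /=; split; nra.
Qed.

Lemma Rabs_Rmin1_exp_sub x y :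
  Rabs (Rmin 1 (exp x) - Rmin 1 (exp y)) <= exp (Rabs (x - y)) - 1.
Proof.
case: (Rle_or_lt y x) => h.
  have [h1 h2] := Rmin1_exp_sub_le _ _ h.
  by rewrite Rabs_right; [rewrite Rabs_right | ]; lra.
have [h1 h2] := Rmin1_exp_sub_le _ _ (Rlt_le _ _ h).
by rewrite Rabs_minus_sym Rabs_right; [rewrite Rabs_minus_sym Rabs_right | ]; lra.
Qed.

Lemma pi_xi_gt0 t : 0 < t -> 0 < pi_xi t.
Proof.
move=> ht; apply: Rmult_lt_0_compat; apply: Rinv_0_lt_compat; last lra.
exact: sqrt_lt_R0.
Qed.

Theorem mainTheorem3 (N p : nat) (W : 'M[R]_(N, p)) (z : 'cV[R]_N)
  (a0 b0 delta : R) :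
  (0 < N)%N -> (0 < p)%N -> 0 < a0 -> 0 < b0 -> 0 < delta ->
  forall (xi xis : R) (eta : 'I_p -> R),
  0 < xi -> 0 < xis -> (forall j, 0 < eta j) ->
  Rabs (alpha_eta a0 b0 W z eta xi xis - alpha_eta_eps a0 b0 delta W z eta xi xis)
   <= exp ((INR N + (INR N + a0) * (sqnorm z / b0)) * opnorm2 W * delta) - 1.
Proof.
move=> _ _ ha0 hb0 hd xi xis eta hxi hxis heta.
rewrite /alpha_eta /alpha_eta_eps /q_eta /q_eta_delta /q_of !likE.
set K := pi_xi xis * xis / (pi_xi xi * xi).
have hK : 0 < K.
  have := pi_xi_gt0 _ hxi; have := pi_xi_gt0 _ hxis => h1 h2.
  by apply: Rdiv_lt_0_compat; apply: Rmult_lt_0_compat.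
have ratio a b : exp a / exp b * K = exp (a - b + ln K).
  by rewrite /Rminus !exp_plus exp_Ropp exp_ln.
rewrite !ratio; apply: (Rle_trans _ _ _ (Rabs_Rmin1_exp_sub _ _)).
apply: Rplus_le_compat_r; apply: exp_le.
have h1 := loglik_Dmat_delta_close W z _ _ _ xi xis eta xis ha0 hb0 hd heta hxis (Rmax_r _ _).
have h2 := loglik_Dmat_delta_close W z _ _ _ xi xis eta xi ha0 hb0 hd heta hxi (Rmax_l _ _).
set L := loglik a0 b0 z in h1 h2 *.
set A1 := L _ in h1; set B1 := L _ in h1; set A2 := L _ in h2; set B2 := L _ in h2.
have -> : A1 - A2 + ln K - (B1 - B2 + ln K) = (A1 - B1) - (A2 - B2) by ring.
apply: (Rle_trans _ _ _ (Rabs_triang _ _)); rewrite Rabs_Ropp sqnormE.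
have -> : (INR N + (INR N + a0) * (dot z z / b0)) * opnorm2 W * delta =
  2 * ((INR N * (delta * opnorm2 W)
        + (INR N + a0) * (delta * opnorm2 W) * dot z z / b0) / 2) by field; lra.
lra.
Qed.
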